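(* Assume $F$ is $\beta$-smooth and $T\ge2$. Run the framework with $\eta\le\frac{1}{\beta T}$. Then for any iteration $t\ge1$ of round $r\ge1$ and any client $i$, $$\|x^{(i)}_{r+1,t}-x_r\|^2\le2\eta^2T\sum_{\tau=1}^tS^{t-\tau}\,\Xi^{(i)}_{r+1,\tau}+22\eta^2T^2\|\nabla F(x_r)\|^2,$$ where $S=\frac{(T+1)^2}{T(T-1)}$ and $\Xi^{(i)}_{r,t}=\|\widehat g^{(i)}_{r,t-1}-\nabla F(x^{(i)}_{r,t-1})\|^2$.
   Context: **Objective.** $F=\frac1N\sum_{i=1}^Nf_i$ is the global objective of $N$ clients. **Framework.** For each round $r$: - each client sets $x^{(i)}_{r,0}=x_{r-1}$ and for $t=1,\dots,T$ updates $x^{(i)}_{r,t}=x^{(i)}_{r,t-1}-\eta\widehat g^{(i)}_{r,t-1}$, where $\widehat g^{(i)}_{r,t-1}$ is an arbitrary gradient estimate; - the server sets $x_r=\frac1N\sum_ix^{(i)}_{r,T}$. *)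

From HB Require Import structures.
From mathcomp Require Import all_boot all_order all_algebra.
From mathcomp Require Import all_classical all_reals all_analysis.
Set Implicit Arguments. Unset Strict Implicit. Unset Printing Implicit Defensive.
Import Order.TTheory GRing.Theory Num.Theory.
Import numFieldNormedType.Exports.
Local Open Scope ring_scope.

Definition dotv (R : realType) (d : nat) (u v : 'rV[R]_d) : R :=
  \sum_(j < d) u ord0 j * v ord0 j.
Definition sqnorm (R : realType) (d : nat) (u : 'rV[R]_d) : R := dotv u u.
Definition enorm (R : realType) (d : nat) (u : 'rV[R]_d) : R := Num.sqrt (sqnorm u).

Definition is_gradient (R : realType) (d : nat)
    (F : 'rV[R]_d -> R) (gradF : 'rV[R]_d -> 'rV[R]_d) : Prop :=
  forall x : 'rV[R]_d, differentiable F x /\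
    forall h : 'rV[R]_d, 'd F x h = dotv (gradF x) h.

Definition smooth (R : realType) (d : nat) (beta : R)
    (F : 'rV[R]_d -> R) (gradF : 'rV[R]_d -> 'rV[R]_d) : Prop :=
  is_gradient F gradF /\
  forall x y : 'rV[R]_d, enorm (gradF x - gradF y) <= beta * enorm (x - y).

Definition global_obj (R : realType) (d N : nat) (f : 'I_N -> 'rV[R]_d -> R)
  : 'rV[R]_d -> R := fun x => N%:R^-1 * \sum_(i < N) f i x.

(* The framework: xc r i t = x^{(i)}_{r,t}, xs r = x_r (xs 0 = initial point),
   g r i t = \hat g^{(i)}_{r,t} (arbitrary gradient estimates). *)
Definition framework (R : realType) (d N T : nat) (eta : R)
    (xs : nat -> 'rV[R]_d) (xc : nat -> 'I_N -> nat -> 'rV[R]_d)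
    (g : nat -> 'I_N -> nat -> 'rV[R]_d) : Prop :=
  (forall r i, (1 <= r)%N -> xc r i 0%N = xs r.-1) /\
  (forall r i t, (1 <= r)%N -> (1 <= t <= T)%N ->
      xc r i t = xc r i t.-1 - eta *: g r i t.-1) /\
  (forall r, (1 <= r)%N -> xs r = N%:R^-1 *: \sum_(i < N) xc r i T).

From HB Require Import structures.
From mathcomp Require Import all_boot all_order all_algebra.
From mathcomp Require Import all_classical all_reals all_analysis.
From mathcomp Require Import ring lra.
Set Implicit Arguments. Unset Strict Implicit. Unset Printing Implicit Defensive.
Import Order.TTheory GRing.Theory Num.Theory.
Local Open Scope ring_scope.

(* Write u_s = ||x_{r+1,s} - x_r||^2 and split the local step direction as
   (g - grad F(x_{s-1})) + (grad F(x_{s-1}) - grad F(x_r)) + grad F(x_r).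
   Young's inequality with weight 1/(T-1), beta-smoothness and eta beta <= 1/T
   give the affine recursion
     u_s <= S u_{s-1} + 2 eta^2 T (Xi_s + ||grad F(x_r)||^2),   u_0 = 0,
   whose unrolling is the claim once sum_{k<T} S^k <= 11 T.  The latter holds
   because S^T = (1 + 1/T)^(2T) (1 + 1/(T-1))^T <= e^3 (1 + 1/(T-1)) and
   e^3 <= 34. *)

Definition drift_rate (R : realType) (x : R) : R := (x + 1) ^+ 2 / (x * (x - 1)).

Section EuclideanNorm.
Variables (R : realType) (d : nat).
Implicit Types (a b e g : 'rV[R]_d).

Lemma sqnorm_ge0 a : 0 <= sqnorm a.
Proof. by apply: sumr_ge0 => j _; rewrite -expr2 sqr_ge0. Qed.

Lemma sqnorm0 : sqnorm (0 : 'rV[R]_d) = 0.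
Proof. by rewrite /sqnorm /dotv big1 // => j _; rewrite mxE mul0r. Qed.

Lemma sqnormZ (c : R) a : sqnorm (c *: a) = c ^+ 2 * sqnorm a.
Proof.
by rewrite /sqnorm /dotv mulr_sumr; apply: eq_bigr => j _; rewrite !mxE; ring.
Qed.

Lemma sqnormD_le a b (c : R) : 0 < c ->
  sqnorm (a + b) <= (1 + c) * sqnorm a + (1 + c^-1) * sqnorm b.
Proof.
move=> c_gt0; rewrite /sqnorm /dotv !mulr_sumr -big_split /=.
apply: ler_sum => j _; rewrite !mxE -subr_ge0.
set x := a ord0 j; set y := b ord0 j.
have -> : (1 + c) * (x * x) + (1 + c^-1) * (y * y) - (x + y) * (x + y)
    = (c * x - y) ^+ 2 / c by field; rewrite gt_eqF.
by rewrite divr_ge0 ?sqr_ge0 ?ltW.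
Qed.

Lemma sqnorm_le_of_enorm_le a b (k : R) : 0 <= k -> enorm a <= k * enorm b ->
  sqnorm a <= k ^+ 2 * sqnorm b.
Proof.
move=> k_ge0 ab; rewrite -[sqnorm a]sqr_sqrtr ?sqnorm_ge0 //.
rewrite -[sqnorm b]sqr_sqrtr ?sqnorm_ge0 // -exprMn.
by apply: lerXn2r; rewrite ?nnegrE ?mulr_ge0 ?sqrtr_ge0.
Qed.

Lemma sqnormBZ_le e a (c k : R) : 0 < c -> 0 < k ->
  sqnorm a <= k ^+ 2 * sqnorm e -> sqnorm (e - c *: a) <= (1 + c * k) ^+ 2 * sqnorm e.
Proof.
move=> c_gt0 k_gt0 ae; have ck_gt0 : 0 < c * k by rewrite mulr_gt0.
rewrite -scaleNr; apply: le_trans (sqnormD_le _ _ ck_gt0) _.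
rewrite sqnormZ sqrrN.
have ae' : c ^+ 2 * sqnorm a <= c ^+ 2 * (k ^+ 2 * sqnorm e).
  by rewrite ler_wpM2l ?sqr_ge0.
have w_ge0 : 0 <= 1 + (c * k)^-1 by rewrite addr_ge0 // invr_ge0 ltW.
apply: le_trans (lerD (lexx _) (ler_wpM2l w_ge0 ae')) _.
by rewrite le_eqVlt; apply/orP; left; apply/eqP; field; rewrite !gt_eqF.
Qed.


(* [e] is the drift accumulated so far, [a] and [b] the gradients at the
   current and anchor points, [g] the gradient estimate. *)
Lemma sqnorm_drift_step (beta eta x : R) (e a b g : 'rV[R]_d) :
  0 < beta -> 0 < eta -> 1 < x -> eta <= (beta * x)^-1 ->
  sqnorm (a - b) <= beta ^+ 2 * sqnorm e ->
  sqnorm (e - eta *: g) <= drift_rate x * sqnorm e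
    + 2 * eta ^+ 2 * x * sqnorm (g - a) + 2 * eta ^+ 2 * x * sqnorm b.
Proof.
move=> beta_gt0 eta_gt0 x_gt1 eta_le ab.
have x_gt0 : 0 < x by lra.
have w_gt0 : 0 < (x - 1)^-1 by rewrite invr_gt0 subr_gt0.
have -> : e - eta *: g = (e - eta *: (a - b)) + (- eta) *: ((g - a) + b).
  by apply/rowP => j; rewrite !mxE; ring.
apply: le_trans (sqnormD_le _ _ w_gt0) _; rewrite invrK sqnormZ sqrrN.
have eta_beta : 1 + eta * beta <= 1 + x^-1.
  by rewrite lerD2l -ler_pdivlMr // mulrC -invfM.
have drift : sqnorm (e - eta *: (a - b)) <= (1 + x^-1) ^+ 2 * sqnorm e.
  apply: le_trans (sqnormBZ_le eta_gt0 beta_gt0 ab) _.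
  apply: ler_wpM2r; first exact: sqnorm_ge0.
  by apply: lerXn2r; rewrite // nnegrE addr_ge0 // ltW ?mulr_gt0 ?invr_gt0.
have noise : sqnorm ((g - a) + b) <= 2 * sqnorm (g - a) + 2 * sqnorm b.
  by apply: le_trans (sqnormD_le _ _ ltr01) _; rewrite invr1; lra.
have w1_ge0 : 0 <= 1 + (x - 1)^-1 by rewrite addr_ge0 // ltW.
have x_ge0 : 0 <= 1 + (x - 1) by lra.
apply: le_trans (lerD (ler_wpM2l w1_ge0 drift)
  (ler_wpM2l x_ge0 (ler_wpM2l (sqr_ge0 eta) noise))) _.
rewrite le_eqVlt; apply/orP; left; apply/eqP; rewrite /drift_rate.
by field; rewrite !gt_eqF // subr_gt0.
Qed.

End EuclideanNorm.

Lemma affine_recurrence_le (R : realType) (S A B : R) (u X : nat -> R) (n : nat) :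
  0 <= S -> u 0%N = 0 ->
  (forall t, (1 <= t <= n)%N -> u t <= S * u t.-1 + A * X t + B) ->
  forall t, (t <= n)%N ->
  u t <= A * (\sum_(1 <= tau < t.+1) S ^+ (t - tau) * X tau) + B * \sum_(k < t) S ^+ k.
Proof.
move=> S_ge0 u0 rec; elim=> [|t IH] tn.
  by rewrite big_geq // big_ord0 u0 !mulr0 addr0.
apply: le_trans (rec t.+1 _) _; first by rewrite /= tn.
have sumX : \sum_(1 <= tau < t.+2) S ^+ (t.+1 - tau) * X tau =
    S * (\sum_(1 <= tau < t.+1) S ^+ (t - tau) * X tau) + X t.+1.
  rewrite big_nat_recr //= subnn expr0 mul1r mulr_sumr; congr (_ + _).
  by apply: eq_big_nat => tau /andP[_ tau_le]; rewrite subSn // exprS mulrA.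
have sumS : \sum_(k < t.+1) S ^+ k = 1 + S * \sum_(k < t) S ^+ k.
  by rewrite big_ord_recl expr0 mulr_sumr; congr (_ + _); apply: eq_bigr => k _; rewrite exprS.
rewrite sumX sumS /=.
set P := \sum_(1 <= tau < t.+1) _; set Q := \sum_(k < t) _.
have -> : A * (S * P + X t.+1) + B * (1 + S * Q) = S * (A * P + B * Q) + A * X t.+1 + B
  by ring.
by rewrite !lerD2r ler_wpM2l // IH // ltnW.
Qed.

Lemma geometric_sum_le (R : realType) (S : R) (t n : nat) : 1 < S -> (t <= n)%N ->
  \sum_(k < t) S ^+ k <= (S ^+ n - 1) / (S - 1).
Proof.
move=> S_gt1 tn; have S1_gt0 : 0 < S - 1 by rewrite subr_gt0.
rewrite subrX1 [(S - 1) * _]mulrC mulfK ?gt_eqF // -(subnKC tn) big_split_ord lerDl.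
by apply: sumr_ge0 => k _; rewrite exprn_ge0 // ltW // (lt_trans ltr01).
Qed.

Section NumericBounds.
Variable R : realType.

Lemma expR1_le : expR (1 : R) <= (4 / 3) ^+ 4.
Proof.
have quarter : (3 / 4) ^+ 4 <= expR (-1 : R).
  have -> : (-1 : R) = 4%:R * (- (1 / 4)) by lra.
  rewrite expRM_natl; apply: lerXn2r; rewrite ?nnegrE ?expR_ge0 //.
  by apply: le_trans (expR_ge1Dx _); lra.
rewrite -[expR 1]invrK -expRN.
have -> : (4 / 3 : R) ^+ 4 = ((3 / 4) ^+ 4)^-1.
  by rewrite -exprVn; congr (_ ^+ _); field.
by rewrite lef_pV2 ?posrE ?expR_gt0 // exprn_gt0 //; lra.
Qed.

Lemma expR1_exp3_le : expR (1 : R) ^+ 3 <= 34.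
Proof.
apply: (le_trans (y := ((4 / 3 : R) ^+ 4) ^+ 3)).
  by apply: lerXn2r; rewrite ?nnegrE ?expR_ge0 ?expR1_le // exprn_ge0.
by rewrite -exprM /= !exprS expr0; lra.
Qed.

Lemma expr_1Dinv_le_expR1 (n : nat) : (0 < n)%N -> (1 + n%:R^-1 : R) ^+ n <= expR 1.
Proof.
move=> n_gt0; have n_gt0' : (0 : R) < n%:R by rewrite ltr0n.
rewrite -[X in expR X](divff (lt0r_neq0 n_gt0')) expRM_natl.
by apply: lerXn2r; rewrite ?nnegrE ?expR_ge0 ?expR_ge1Dx.
Qed.

Lemma drift_rate_sub1 (x : R) : 1 < x -> drift_rate x - 1 = (3 * x + 1) / (x * (x - 1)).
Proof. by move=> x_gt1; rewrite /drift_rate; field; rewrite !gt_eqF // ?subr_gt0; lra. Qed.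

Lemma drift_rate_expn_le (T : nat) : (2 <= T)%N ->
  drift_rate T%:R ^+ T <= 34 * (1 + (T%:R - 1)^-1 : R).
Proof.
case: T => [|m] // m_gt0; rewrite -natr1 addrK.
set y : R := m%:R; have y_ge1 : 1 <= y by rewrite ler1n.
set A := (1 + (y + 1)^-1) ^+ m.+1; set B := (1 + y^-1) ^+ m.
have A_le : A <= expR 1 by rewrite /A /y natr1 expr_1Dinv_le_expR1.
have B_le : B <= expR 1 by exact: expr_1Dinv_le_expR1.
have A_ge0 : 0 <= A by rewrite exprn_ge0 // addr_ge0 // invr_ge0; lra.
have B_ge0 : 0 <= B by rewrite exprn_ge0 // addr_ge0 // invr_ge0; lra.
have -> : drift_rate (y + 1) ^+ m.+1 = A * A * B * (1 + y^-1).
  have -> : drift_rate (y + 1) = (1 + (y + 1)^-1) ^+ 2 * (1 + y^-1).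
    by rewrite /drift_rate; field; rewrite !gt_eqF //; lra.
  by rewrite exprMn -exprM mul2n -addnn exprD [(1 + y^-1) ^+ _]exprS /A /B; ring.
have AAB_le : A * A * B <= 34.
  apply: le_trans expR1_exp3_le; rewrite !exprS expr0 mulr1 mulrA.
  by rewrite ler_pM ?mulr_ge0 ?ler_pM.
by rewrite ler_wpM2r // addr_ge0 // invr_ge0; lra.
Qed.

Lemma sum_drift_rate_le (T t : nat) : (2 <= T)%N -> (t <= T)%N ->
  \sum_(k < t) drift_rate (T%:R : R) ^+ k <= 11 * T%:R.
Proof.
move=> T2 tT; have x_gt1 : (1 : R) < T%:R by rewrite ltr1n.
have rate_gt1 : 1 < drift_rate (T%:R : R).
  by rewrite -subr_gt0 drift_rate_sub1 // divr_gt0 ?mulr_gt0 ?subr_gt0; lra.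
apply: le_trans (geometric_sum_le rate_gt1 tT) _.
rewrite ler_pdivrMr ?subr_gt0 // drift_rate_sub1 //.
apply: le_trans (lerB (drift_rate_expn_le T2) (lexx 1)) _.
set x : R := T%:R; set w := (x - 1)^-1.
have w_ge0 : 0 <= w by rewrite invr_ge0 subr_ge0 ltW.
have -> : 11 * x * ((3 * x + 1) / (x * (x - 1))) = 33 + 44 * w.
  by rewrite /w; field; rewrite !gt_eqF // ?subr_gt0; lra.
lra.
Qed.

End NumericBounds.

Theorem lemmaC11 (R : realType) (d N T : nat) (beta eta : R)
    (f : 'I_N -> 'rV[R]_d -> R) (gradF : 'rV[R]_d -> 'rV[R]_d)
    (xs : nat -> 'rV[R]_d) (xc : nat -> 'I_N -> nat -> 'rV[R]_d)
    (g : nat -> 'I_N -> nat -> 'rV[R]_d) :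
  (0 < N)%N -> 0 < beta ->
  smooth beta (global_obj f) gradF ->
  (2 <= T)%N ->
  0 < eta -> eta <= (beta * T%:R)^-1 ->
  framework T eta xs xc g ->
  let S := (T%:R + 1) ^+ 2 / (T%:R * (T%:R - 1)) in
  let Xi := fun (r : nat) (i : 'I_N) (t : nat) =>
    sqnorm (g r i t.-1 - gradF (xc r i t.-1)) in
  forall (r t : nat) (i : 'I_N), (1 <= r)%N -> (1 <= t <= T)%N ->
    sqnorm (xc r.+1 i t - xs r) <=
      2 * eta ^+ 2 * T%:R * (\sum_(1 <= tau < t.+1) S ^+ (t - tau) * Xi r.+1 i tau)
      + 22 * eta ^+ 2 * T%:R ^+ 2 * sqnorm (gradF (xs r)).
Proof.
move=> _ beta_gt0 [_ lipF] T2 eta_gt0 eta_le [xc0 [xc_step _]] S Xi r t i _.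
move=> /andP[_ tT]; rewrite -[S]/(drift_rate T%:R).
have T_gt1 : (1 : R) < T%:R by rewrite ltr1n.
pose u s := sqnorm (xc r.+1 i s - xs r).
pose B := 2 * eta ^+ 2 * T%:R * sqnorm (gradF (xs r)).
have u0 : u 0%N = 0 by rewrite /u xc0 // subrr sqnorm0.
have u_rec s : (1 <= s <= T)%N ->
    u s <= drift_rate T%:R * u s.-1 + 2 * eta ^+ 2 * T%:R * Xi r.+1 i s + B.
  move=> sT; rewrite /u xc_step // addrAC.
  apply: (sqnorm_drift_step (beta := beta)) => //.
  by apply: sqnorm_le_of_enorm_le; [exact: ltW | exact: lipF].
have rate_ge0 : 0 <= drift_rate (T%:R : R).
  by rewrite divr_ge0 ?sqr_ge0 ?mulr_ge0 //; lra.
apply: le_trans (affine_recurrence_le rate_ge0 u0 u_rec tT) _.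
rewrite lerD2l; have B_ge0 : 0 <= B by rewrite /B !mulr_ge0 ?sqnorm_ge0 ?ler0n ?ltW.
apply: le_trans (ler_wpM2l B_ge0 (sum_drift_rate_le R T2 tT)) _.
by rewrite le_eqVlt; apply/orP; left; apply/eqP; rewrite /B; ring.
Qed.
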